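(* Let $N\ge 3$ be an integer and $a>0$ real. Let $H=H^{(N)}(a)$ be the real $N\times N$ tridiagonal matrix with $H_{nn}=a+2n-1$, $H_{n,n+1}=-n$, $H_{n+1,n}=-(a+n)$, all other entries zero, and write $D_n(a)=\prod_{j=1}^{n-1}(a+j)$. Then there exists a real symmetric pentadiagonal $N\times N$ matrix $\mathcal P_2=\mathcal P_2^{(N)}(a)$ with $H^\dagger\mathcal P_2=\mathcal P_2H$ whose entries are $(\mathcal P_2)_{11}=(\mathcal P_2)_{12}=0$, $(\mathcal P_2)_{13}=1$, $$(\mathcal P_2)_{nn}=\frac{(n-1)\,(n-1)!\,(a+3n-4)}{D_n(a)}\quad(n=2,\dots,N-1),$$ $$(\mathcal P_2)_{n,n+1}=-\frac{2(n-1)\,n!}{D_n(a)}\quad(n=2,\dots,N-1),\qquad (\mathcal P_2)_{n,n+2}=\frac{(n+1)!}{2D_n(a)}\quad(n=2,\dots,N-2),$$ (the remaining entry $(\mathcal P_2)_{NN}$ being some real number depending on $N$ and $a$). Consequently, with $\Theta_0$ and $\mathcal P_1$ as in the context, for all real $\alpha,\beta$ the pentadiagonal matrix $\Theta_2=\Theta_0+\alpha\mathcal P_1+\beta\mathcal P_2$ satisfies $H^\dagger\Theta_2=\Theta_2H$, and it is a positive definite metric for $H$ whenever $|\alpha|,|\beta|$ are sufficiently small.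
   Context: $H^\dagger$ is the conjugate transpose. A metric for $H$ is a positive definite Hermitian matrix $\Theta$ with $H^\dagger\Theta=\Theta H$. $\Theta_0$ is the diagonal matrix with $(\Theta_0)_{nn}=(n-1)!/D_n(a)$; $\mathcal P_1$ is the real symmetric tridiagonal matrix with $(\mathcal P_1)_{11}=0$, $(\mathcal P_1)_{nn}=-2(n-1)(n-1)!/D_n(a)$ for $n\ge2$, and $(\mathcal P_1)_{n,n+1}=(\mathcal P_1)_{n+1,n}=n!/D_n(a)$; both satisfy $H^\dagger X=XH$. Symmetric entries are understood: $(\mathcal P_2)_{ji}=(\mathcal P_2)_{ij}$. *)

From HB Require Import structures.
From mathcomp Require Import all_boot all_order all_algebra.
From mathcomp Require Import reals.
Set Implicit Arguments. Unset Strict Implicit. Unset Printing Implicit Defensive.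
Import Order.TTheory GRing.Theory Num.Theory.
Local Open Scope ring_scope.

(* Indices: the matrix index i : 'I_N corresponds to the paper's n = i+1. *)

Definition Dn {R : realType} (a : R) (n : nat) : R :=
  \prod_(1 <= j < n) (a + j%:R).

Definition Hmat {R : realType} (N : nat) (a : R) : 'M[R]_N :=
  \matrix_(i < N, j < N)
    (if (j : nat) == i then a + (2 * i.+1)%:R - 1
     else if (j : nat) == i.+1 then - (i.+1)%:R
     else if (i : nat) == j.+1 then - (a + (j.+1)%:R)
     else 0).

Definition Theta0 {R : realType} (N : nat) (a : R) : 'M[R]_N :=
  \matrix_(i < N, j < N)
    (if (j : nat) == i then (i`! )%:R / Dn a i.+1 else 0).

Definition P1mat {R : realType} (N : nat) (a : R) : 'M[R]_N :=
  \matrix_(i < N, j < N)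
    (if (j : nat) == i then
       (if (i : nat) == 0%N then 0 else - ((2 * i * i`! )%:R / Dn a i.+1))
     else if (j : nat) == i.+1 then (i.+1`! )%:R / Dn a i.+1
     else if (i : nat) == j.+1 then (j.+1`! )%:R / Dn a j.+1
     else 0).

Definition posdef {R : realType} (N : nat) (T : 'M[R]_N) : Prop :=
  T^T = T /\ forall x : 'cV[R]_N, x != 0 -> 0 < (x^T *m T *m x) 0 0.

(* Theta is a metric for H: positive definite Hermitian with H^dagger Theta = Theta H
   (H real, so H^dagger = H^T). *)
Definition is_metric {R : realType} (N : nat) (H T : 'M[R]_N) : Prop :=
  posdef T /\ H^T *m T = T *m H.

Definition pentadiagonal {R : realType} (N : nat) (P : 'M[R]_N) : Prop :=
  forall i j : 'I_N, (i + 2 < j)%N \/ (j + 2 < i)%N -> P i j = 0.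

From HB Require Import structures.
From mathcomp Require Import all_boot all_order all_algebra.
From mathcomp Require Import reals.
From mathcomp Require Import zify ring lra.
Import Order.TTheory GRing.Theory Num.Theory.
Set Implicit Arguments. Unset Strict Implicit. Unset Printing Implicit Defensive.
Local Open Scope ring_scope.

(* All three matrices are symmetric and pentadiagonal. For such a P, since
   H^T P = (P H)^T, the identity H^T P = P H says that P H is symmetric; P H is
   heptadiagonal, so this is a three-term recurrence for each of the first three
   superdiagonals. With theta_k = k!/D_{k+1} = (Theta0)_{kk} and
   theta_{k+1} = (k+1)/(a+k+1) theta_k, the bands of Theta0, P1 and P2 are
   polynomial multiples of theta_k and every recurrence becomes a rational
   identity in a and k; the (N, N) entry of P2 is whatever the last row forces.
   For the metric property, Theta0 is diagonal with positive entries, so its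
   quadratic form dominates m |x|^2 for some m > 0, while the form of any matrix
   E is bounded by (sum_ij |E_ij|) |x|^2, which is small for small alpha, beta. *)

Lemma big_ord_band3 (V : nmodType) (N i : nat) (f : nat -> V) : (i < N)%N ->
  (forall k, (k.+1 < i)%N || (i.+1 < k)%N -> f k = 0) -> f N = 0 ->
  \sum_(k < N) f k = (if (0 < i)%N then f i.-1 else 0) + f i + f i.+1.
Proof.
move=> iN f0 fN0.
have band : forall M, (i.+2 <= M)%N ->
    \sum_(0 <= k < M) f k = (if (0 < i)%N then f i.-1 else 0) + f i + f i.+1.
  move=> M iM; rewrite (big_cat_nat (n := i.+2)) //= [X in _ + X]big1_seq ?addr0;
    last by move=> k /andP[_]; rewrite mem_iota => /andP[k1 k2]; apply: f0; lia.
  case: i iN f0 iM => [|i] _ f0 _; first by rewrite !big_nat_recr //= big_geq // add0r.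
  rewrite !big_nat_recr //= big1_seq ?add0r //.
  by move=> k /andP[_]; rewrite mem_iota => /andP[k1 k2]; apply: f0; lia.
rewrite -(big_mkord xpredT f); have [iN1|iN1] := ltnP i.+1 N; first exact: band.
have eN : N = i.+1 by lia.
by have := band i.+2 (leqnn _); rewrite big_nat_recr //= -eN fN0 addr0 => <-.
Qed.

Section Tridiagonal.
Variable R : comPzRingType.
Implicit Types (a : R) (p : nat -> nat -> R).

Definition hcoef a (i j : nat) : R :=
  if j == i then a + (2 * i.+1)%:R - 1
  else if j == i.+1 then - (i.+1)%:R
  else if i == j.+1 then - (a + (j.+1)%:R)
  else 0.

Lemma hcoef_diag a i : hcoef a i i = a + (2 * i.+1)%:R - 1.
Proof. by rewrite /hcoef eqxx. Qed.

Lemma hcoef_sup a i : hcoef a i i.+1 = - (i.+1)%:R.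
Proof. by rewrite /hcoef eqxx (gtn_eqF (ltnSn i)). Qed.

Lemma hcoef_sub a i : hcoef a i.+1 i = - (a + (i.+1)%:R).
Proof.
rewrite /hcoef eqxx.
have -> : (i == i.+1) = false by lia.
by have -> : (i == i.+2) = false by lia.
Qed.

Lemma hcoef_far a k l : (k.+1 < l)%N || (l.+1 < k)%N -> hcoef a k l = 0.
Proof.
move=> h; rewrite /hcoef.
have -> : (l == k) = false by lia.
have -> : (l == k.+1) = false by lia.
by have -> : (k == l.+1) = false by lia.
Qed.

Definition pent (N : nat) (dd ee ff : nat -> R) (i j : nat) : R :=
  if ((i < N) && (j < N))%N then
    if j == i then dd i
    else if j == i.+1 then ee i else if i == j.+1 then ee j
    else if j == i.+2 then ff i else if i == j.+2 then ff j
    else 0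
  else 0.

Section PentEntries.
Variables (N : nat) (dd ee ff : nat -> R).
Local Notation p := (pent N dd ee ff).

Lemma pent_sym i j : p i j = p j i.
Proof.
rewrite /pent andbC; case: (_ && _) => //.
by case: (ltngtP i j) => [ij|ji|<-] //; repeat case: eqP => [?|_] //; try lia.
Qed.

Lemma pent_out i j : (N <= i)%N || (N <= j)%N -> p i j = 0.
Proof. by move=> h; rewrite /pent; have -> : ((i < N) && (j < N))%N = false by lia. Qed.

Lemma pent_far i j : (i.+2 < j)%N || (j.+2 < i)%N -> p i j = 0.
Proof.
move=> h; rewrite /pent; case: (_ && _) => //.
by repeat case: eqP => [?|_]; try lia.
Qed.

Lemma pent_diag i : (i < N)%N -> p i i = dd i.
Proof. by move=> iN; rewrite /pent iN eqxx. Qed.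

Lemma pent_sup1 i : (i.+1 < N)%N -> p i i.+1 = ee i.
Proof. by move=> iN; rewrite /pent iN ltnW //= eqxx gtn_eqF. Qed.

Lemma pent_sup2 i : (i.+2 < N)%N -> p i i.+2 = ff i.
Proof.
move=> iN; rewrite /pent iN ltnW 1?ltnW //= eqxx.
by repeat case: eqP => [?|_]; try lia.
Qed.

Lemma pent_mx_sym (P : 'M[R]_N) : (forall i j : 'I_N, P i j = p i j) -> P^T = P.
Proof. by move=> P_p; apply/matrixP => i j; rewrite mxE !P_p pent_sym. Qed.

End PentEntries.

Definition Htmul a p i j : R :=
  (if (0 < i)%N then hcoef a i.-1 i * p i.-1 j else 0)
  + hcoef a i i * p i j + hcoef a i.+1 i * p i.+1 j.

Definition mulH a p i j : R :=
  (if (0 < j)%N then p i j.-1 * hcoef a j.-1 j else 0)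
  + p i j * hcoef a j j + p i j.+1 * hcoef a j.+1 j.

Lemma Htmul_sym a p i j : (forall i j, p i j = p j i) -> Htmul a p j i = mulH a p i j.
Proof. by move=> ps; rewrite /Htmul /mulH !(ps _ i) !(mulrC (hcoef a _ j)). Qed.

Section PentIntertwining.
Variables (a : R) (N : nat) (dd ee ff : nat -> R).
Local Notation p := (pent N dd ee ff).

Hypothesis rel_sup3 : forall i, (i.+3 < N)%N ->
  hcoef a i.+1 i * ff i.+1 = ff i * hcoef a i.+2 i.+3.
Hypothesis rel_sup2 : forall i, (i.+2 < N)%N ->
  hcoef a i i * ff i + hcoef a i.+1 i * ee i.+1
  = ee i * hcoef a i.+1 i.+2 + ff i * hcoef a i.+2 i.+2.
Hypothesis rel_sup1 : forall i, (i.+2 < N)%N ->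
  (if (0 < i)%N then hcoef a i.-1 i * ff i.-1 else 0)
  + hcoef a i i * ee i + hcoef a i.+1 i * dd i.+1
  = dd i * hcoef a i i.+1 + ee i * hcoef a i.+1 i.+1 + ff i * hcoef a i.+2 i.+1.
Hypothesis rel_last : forall i, i.+2 = N ->
  (if (0 < i)%N then hcoef a i.-1 i * ff i.-1 else 0)
  + hcoef a i i * ee i + hcoef a i.+1 i * dd i.+1
  = dd i * hcoef a i i.+1 + ee i * hcoef a i.+1 i.+1.

Lemma pent_intertwine_sup1 i : (i.+1 < N)%N -> Htmul a p i i.+1 = mulH a p i i.+1.
Proof.
move=> iN; have lt_iN := ltnW iN.
rewrite /Htmul /mulH /= pent_sup1 // !pent_diag //.
have -> : (if (0 < i)%N then hcoef a i.-1 i * p i.-1 i.+1 else 0)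
        = (if (0 < i)%N then hcoef a i.-1 i * ff i.-1 else 0).
  by case: i {lt_iN} iN => //= i iN; rewrite pent_sup2.
have [i2N|i2N] := ltnP i.+2 N; first by rewrite pent_sup2 // rel_sup1.
by rewrite pent_out ?i2N ?orbT // mul0r addr0 rel_last //; lia.
Qed.

Lemma pent_intertwine_sup2 i : (i.+2 < N)%N -> Htmul a p i i.+2 = mulH a p i i.+2.
Proof.
move=> iN; have lt_iN : (i.+1 < N)%N := ltnW iN.
rewrite /Htmul /mulH /= pent_sup2 // !pent_sup1 // (@pent_far _ _ _ _ i) ?ltnSn //.
have -> : (if (0 < i)%N then hcoef a i.-1 i * p i.-1 i.+2 else 0) = 0.
  by case: i {lt_iN} iN => //= i iN; rewrite pent_far ?ltnSn ?mulr0.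
by rewrite mul0r addr0 add0r rel_sup2.
Qed.

Lemma pent_intertwine_sup3 i : (i.+3 < N)%N -> Htmul a p i i.+3 = mulH a p i i.+3.
Proof.
move=> iN; have lt_iN : (i.+2 < N)%N := ltnW iN.
rewrite /Htmul /mulH /= !pent_sup2 // (@pent_far _ _ _ _ i i.+3) ?ltnSn //.
rewrite (@pent_far _ _ _ _ i i.+4) ?leqnSn //.
have -> : (if (0 < i)%N then hcoef a i.-1 i * p i.-1 i.+3 else 0) = 0.
  by case: i {lt_iN} iN => //= i iN; rewrite pent_far ?leqnSn ?mulr0.
by rewrite !mul0r !mulr0 !addr0 add0r rel_sup3.
Qed.

Lemma pent_intertwine_far i j : (i.+3 < j)%N -> Htmul a p i j = mulH a p i j.
Proof.
move=> ij; have far k l : (k.+2 < l)%N -> p k l = 0 by move=> kl; rewrite pent_far ?kl.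
rewrite /Htmul /mulH (_ : (0 < j)%N) ?(leq_ltn_trans _ ij) //.
by rewrite !far ?mulr0 ?mul0r ?if_same ?addr0 //; lia.
Qed.

Lemma pent_intertwine i j : (i < N)%N -> (j < N)%N -> Htmul a p i j = mulH a p i j.
Proof.
have p_sym : forall i j, p i j = p j i by exact: pent_sym.
wlog ij : i j / (i <= j)%N.
  move=> upper iN jN; have [ij|ji] := leqP i j; first exact: upper.
  by rewrite (@Htmul_sym a p j i) // -(@Htmul_sym a p i j) // upper // ltnW.
move=> iN jN; have [d def_j] : exists d, j = (i + d)%N by exists (j - i)%N; lia.
subst j.
case: d jN {ij} => [|[|[|[|d]]]] jN; rewrite ?addn0 ?addn1 ?addn2 ?addn3 in jN *.
- by rewrite Htmul_sym.
- exact: pent_intertwine_sup1.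
- exact: pent_intertwine_sup2.
- exact: pent_intertwine_sup3.
- by apply: pent_intertwine_far; lia.
Qed.

End PentIntertwining.
End Tridiagonal.

Lemma Hmat_intertwine (R : realType) (N : nat) (a : R) (P : 'M[R]_N) (p : nat -> nat -> R) :
  (forall i j : 'I_N, P i j = p i j) ->
  (forall i j, (N <= i)%N || (N <= j)%N -> p i j = 0) ->
  (forall i j, (i < N)%N -> (j < N)%N -> Htmul a p i j = mulH a p i j) ->
  (Hmat N a)^T *m P = P *m Hmat N a.
Proof.
move=> P_p p_out p_rel; apply/matrixP => i j; rewrite !mxE.
under eq_bigr do rewrite !mxE P_p.
under [RHS]eq_bigr do rewrite !mxE P_p.
rewrite (@big_ord_band3 _ N i (fun k => hcoef a k i * p k j) (ltn_ord i)); first last.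
- by rewrite p_out ?leqnn ?mulr0.
- by move=> k ik; rewrite hcoef_far ?mul0r.
rewrite (@big_ord_band3 _ N j (fun k => p i k * hcoef a k j) (ltn_ord j)); first last.
- by rewrite p_out ?leqnn ?orbT ?mul0r.
- by move=> k jk; rewrite hcoef_far ?mulr0.
exact: p_rel.
Qed.

Section ClosedForms.
Variables (R : realType) (a : R).
Hypothesis a_gt0 : 0 < a.

Lemma Dn1 : Dn a 1 = 1.
Proof. by rewrite /Dn big_geq. Qed.

Lemma DnS k : Dn a k.+2 = Dn a k.+1 * (a + k.+1%:R).
Proof. by rewrite /Dn big_nat_recr. Qed.

Lemma Dn_gt0 k : 0 < Dn a k.
Proof. by apply: prodr_gt0 => j _; rewrite ltr_pwDl. Qed.

Local Ltac nonzero := repeat (apply/andP; split); try done; apply: lt0r_neq0;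
  first [exact: Dn_gt0 | by rewrite ltr0n | by apply: ltr_pwDl; rewrite ?addr_ge0].

Definition theta k : R := k`!%:R / Dn a k.+1.

Lemma theta_gt0 k : 0 < theta k.
Proof. by rewrite divr_gt0 ?Dn_gt0 // ltr0n fact_gt0. Qed.

Lemma theta0 : theta 0 = 1.
Proof. by rewrite /theta Dn1 divr1. Qed.

Lemma thetaS k : theta k.+1 = k.+1%:R / (a + k.+1%:R) * theta k.
Proof. by rewrite /theta DnS factS natrM; field; nonzero. Qed.

Lemma Theta0_pent N (i j : 'I_N) :
  Theta0 N a i j = pent N theta (fun=> 0) (fun=> 0) i j.
Proof. by rewrite mxE /pent !ltn_ord /=; case: eqP; rewrite ?if_same. Qed.

Definition P1diag k : R := - (2 * k%:R) * theta k.
Definition P1sup k : R := k.+1%:R * theta k.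

Lemma P1mat_pent N (i j : 'I_N) :
  P1mat N a i j = pent N P1diag P1sup (fun=> 0) i j.
Proof.
rewrite mxE /pent !ltn_ord /= !if_same /P1diag /P1sup /theta.
case: eqP => _; last by rewrite !factS !natrM !mulrA.
by case: eqP => [->|_]; rewrite ?mulr0n ?mulr0 ?oppr0 ?mul0r // !natrM; ring.
Qed.

Local Ltac check_rel := rewrite ?hcoef_diag ?hcoef_sup ?hcoef_sub ?thetaS; field; nonzero.

Lemma theta_rel i : hcoef a i.+1 i * theta i.+1 = theta i * hcoef a i i.+1.
Proof. by check_rel. Qed.

Lemma Theta0_intertwine N : (Hmat N a)^T *m Theta0 N a = Theta0 N a *m Hmat N a.
Proof.
apply: (Hmat_intertwine (@Theta0_pent N)); first by move=> i j; apply: pent_out.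
apply: pent_intertwine => i _; rewrite ?mulr0 ?mul0r ?if_same ?add0r ?addr0 //.
all: exact: theta_rel.
Qed.

Lemma P1mat_intertwine N : (Hmat N a)^T *m P1mat N a = P1mat N a *m Hmat N a.
Proof.
apply: (Hmat_intertwine (@P1mat_pent N)); first by move=> i j; apply: pent_out.
apply: pent_intertwine => i _; rewrite ?mulr0 ?mul0r ?if_same ?add0r ?addr0 //.
all: rewrite /P1diag /P1sup; check_rel.
Qed.

Definition P2diag k : R := k%:R * (a + 3 * k%:R - 1) * theta k.
Definition P2sup1 k : R := - (2 * k%:R * k.+1%:R) * theta k.
Definition P2sup2 k : R := k.+1%:R * k.+2%:R / 2 * theta k.

(* The (N, N) entry does not follow [P2diag]: it solves [rel_last] at i = N - 2. *)
Definition P2last N : R := let k := N.-2 in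
  (k.+1%:R * P2diag k - 2 * P2sup1 k - k%:R * P2sup2 k.-1) / (a + k.+1%:R).

Definition P2diagN N k : R := if k.+1 == N then P2last N else P2diag k.

Definition P2mat N : 'M[R]_N := \matrix_(i, j) pent N (P2diagN N) P2sup1 P2sup2 i j.

Lemma P2mat_intertwine N : (Hmat N a)^T *m P2mat N = P2mat N *m Hmat N a.
Proof.
apply: (@Hmat_intertwine _ _ _ _ (pent N (P2diagN N) P2sup1 P2sup2)).
- by move=> i j; rewrite mxE.
- by move=> i j; apply: pent_out.
apply: pent_intertwine => i iN; rewrite /P2diagN /P2sup1 /P2sup2.
- by check_rel.
- by check_rel.
- rewrite (ltn_eqF iN) (ltn_eqF (ltnW iN)) /P2diag.
  by case: i iN => [|i] _ /=; check_rel.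
rewrite -iN eqxx (ltn_eqF (ltnSn _)) /P2last /P2diag /P2sup1 /P2sup2 /=.
by case: i {iN} => [|i] /=; check_rel.
Qed.

Lemma P2mat_entries N (i j : 'I_N) : (3 <= N)%N ->
  let n := i.+1 in
  [/\ ((i : nat) = 0%N -> (j : nat) = 0%N -> P2mat N i j = 0) /\
      ((i : nat) = 0%N -> (j : nat) = 1%N -> P2mat N i j = 0) /\
      ((i : nat) = 0%N -> (j : nat) = 2%N -> P2mat N i j = 1),
      ((2 <= n)%N -> (n <= N - 1)%N -> (j : nat) = i ->
        P2mat N i j = ((n - 1) * (n - 1)`! )%:R * (a + (3 * n - 4)%:R) / Dn a n),
      ((2 <= n)%N -> (n <= N - 1)%N -> (j : nat) = i.+1 ->
        P2mat N i j = - ((2 * (n - 1) * n`! )%:R / Dn a n))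
    & ((2 <= n)%N -> (n <= N - 2)%N -> (j : nat) = i.+2 ->
        P2mat N i j = ((n.+1)`! )%:R / (2 * Dn a n))].
Proof.
move=> N3 n; rewrite {}/n [(i.+1 - 1)%N]subn1 succnK; split; [split; [|split] | | |].
- move=> i0 j0; rewrite mxE i0 j0 pent_diag /P2diagN; last lia.
  by rewrite (ltn_eqF (ltnW N3)) /P2diag !mul0r.
- move=> i0 j0; rewrite mxE i0 j0 pent_sup1; last lia.
  by rewrite /P2sup1 !mulr0n !mulr0 mul0r oppr0 mul0r.
- move=> i0 j0; rewrite mxE i0 j0 pent_sup2 // /P2sup2 theta0.
  by field; nonzero.
- move=> i1 iN ji; rewrite mxE ji pent_diag // /P2diagN ltn_eqF; last lia.
  rewrite /P2diag /theta (_ : (3 * i.+1 - 4 = 3 * i - 1)%N); last lia.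
  by rewrite natrB; [rewrite !natrM; ring | lia].
- move=> i1 iN ji; rewrite mxE ji pent_sup1; last lia.
  by rewrite /P2sup1 /theta factS !natrM; ring.
move=> i1 iN ji; rewrite mxE ji pent_sup2; last lia.
by rewrite /P2sup2 /theta !factS !natrM invfM; ring.
Qed.

End ClosedForms.

Section QuadraticForm.
Variables (R : realFieldType) (N : nat).
Implicit Types (T A B : 'M[R]_N) (x : 'cV[R]_N).

Definition qform T x : R := \sum_i \sum_j x i 0 * T i j * x j 0.
Definition sqnorm x : R := \sum_i x i 0 ^+ 2.
Definition mx_norm1 T : R := \sum_i \sum_j `|T i j|.

Lemma qformE T x : (x^T *m T *m x) 0 0 = qform T x.
Proof.
rewrite mxE /qform; under eq_bigr do rewrite mxE mulr_suml.
by rewrite exchange_big; apply: eq_bigr => i _; apply: eq_bigr => j _; rewrite !mxE.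
Qed.

Lemma qformD A B x : qform (A + B) x = qform A x + qform B x.
Proof.
rewrite /qform -big_split; apply: eq_bigr => i _; rewrite -big_split.
by apply: eq_bigr => j _; rewrite mxE mulrDr mulrDl.
Qed.

Lemma mx_norm1_ge0 T : 0 <= mx_norm1 T.
Proof. by apply: sumr_ge0 => i _; apply: sumr_ge0. Qed.

Lemma sqr_le_sqnorm x k : x k 0 ^+ 2 <= sqnorm x.
Proof. by rewrite /sqnorm (bigD1 k) //= lerDl sumr_ge0 // => i _; apply: sqr_ge0. Qed.

Lemma sqnorm_gt0 x : x != 0 -> 0 < sqnorm x.
Proof.
move=> x_neq0; have [k xk_neq0] : exists k, x k 0 != 0.
  apply/existsP; apply: contraR x_neq0; rewrite negb_exists => /forallP x0.
  by apply/eqP/matrixP => i j; rewrite (ord1 j) mxE; apply/eqP/negbNE.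
by apply: lt_le_trans (sqr_le_sqnorm x k); rewrite exprn_even_gt0 ?xk_neq0 ?orbT.
Qed.

Lemma qform_le_norm1 T x : `|qform T x| <= mx_norm1 T * sqnorm x.
Proof.
rewrite /qform /mx_norm1 mulr_suml; apply: le_trans (ler_norm_sum _ _ _) _.
apply: ler_sum => i _; rewrite mulr_suml; apply: le_trans (ler_norm_sum _ _ _) _.
apply: ler_sum => j _; rewrite !normrM (mulrC `|x i 0|) -mulrA ler_wpM2l //.
have xi2 : `|x i 0| ^+ 2 <= sqnorm x by rewrite real_normK ?num_real ?sqr_le_sqnorm.
have xj2 : `|x j 0| ^+ 2 <= sqnorm x by rewrite real_normK ?num_real ?sqr_le_sqnorm.
have := normr_ge0 (x i 0); have := normr_ge0 (x j 0); nra.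
Qed.

Lemma qform_diag_ge T m x : (forall i j, i != j -> T i j = 0) ->
  (forall i, m <= T i i) -> m * sqnorm x <= qform T x.
Proof.
move=> T_diag m_le; rewrite /qform /sqnorm mulr_sumr; apply: ler_sum => i _.
rewrite (bigD1 i) //= big1 ?addr0 => [|j ji]; last by rewrite T_diag 1?eq_sym ?mulr0 ?mul0r.
by rewrite mulrAC -expr2 (mulrC m) ler_wpM2l ?sqr_ge0.
Qed.

Lemma qform_perturb_gt0 T E m x : (forall y, m * sqnorm y <= qform T y) ->
  mx_norm1 E < m -> x != 0 -> 0 < qform (T + E) x.
Proof.
move=> T_ge E_lt x_neq0; have s_gt0 := sqnorm_gt0 x_neq0.
have := qform_le_norm1 E x; rewrite qformD ler_norml => /andP[E_ge _].
have : mx_norm1 E * sqnorm x < m * sqnorm x by rewrite ltr_pM2r.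
by have := T_ge x; lra.
Qed.

Lemma mx_norm1D A B : mx_norm1 (A + B) <= mx_norm1 A + mx_norm1 B.
Proof.
rewrite /mx_norm1 -big_split ler_sum // => i _; rewrite -big_split ler_sum // => j _.
by rewrite mxE ler_normD.
Qed.

Lemma mx_norm1Z c A : mx_norm1 (c *: A) = `|c| * mx_norm1 A.
Proof.
rewrite /mx_norm1 mulr_sumr; apply: eq_bigr => i _; rewrite mulr_sumr.
by apply: eq_bigr => j _; rewrite mxE normrM.
Qed.
End QuadraticForm.

Lemma fin_lower_bound (R : realDomainType) (T : finType) (f : T -> R) :
  (forall t, 0 < f t) -> exists2 m, 0 < m & forall t, m <= f t.
Proof.
move=> f_gt0; exists (\big[Num.min/1]_t f t).
  by elim/big_rec: _ => // t y _ y_gt0; rewrite lt_min f_gt0.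
by move=> t; rewrite (bigD1 t) //= ge_min lexx.
Qed.

Lemma small_pair_combination (R : realFieldType) (m c1 c2 : R) :
  0 < m -> 0 <= c1 -> 0 <= c2 -> exists2 eps : R, 0 < eps &
  forall al be : R, `|al| < eps -> `|be| < eps -> `|al| * c1 + `|be| * c2 < m.
Proof.
move=> m_gt0 c1_ge0 c2_ge0; have c_gt0 : 0 < 1 + c1 + c2 by lra.
exists (m / (1 + c1 + c2)); first by rewrite divr_gt0.
move=> al be al_lt be_lt; set eps := m / _ in al_lt be_lt.
have eps_def : eps * (1 + c1 + c2) = m by rewrite /eps mulfVK ?gt_eqF.
have := normr_ge0 al; have := normr_ge0 be; nra.
Qed.

Lemma posdef_perturb (R : realType) N (T A B : 'M[R]_N) m : 0 < m ->
  (forall x, m * sqnorm x <= qform T x) -> T^T = T -> A^T = A -> B^T = B ->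
  exists2 eps : R, 0 < eps & forall al be : R, `|al| < eps -> `|be| < eps ->
    posdef (T + al *: A + be *: B).
Proof.
move=> m_gt0 T_ge T_sym A_sym B_sym.
have [eps eps_gt0 small] := small_pair_combination m_gt0 (mx_norm1_ge0 A) (mx_norm1_ge0 B).
exists eps => // al be al_lt be_lt; split; first by rewrite !linearD !linearZ /= T_sym A_sym B_sym.
move=> x x_neq0; rewrite qformE -addrA; apply: qform_perturb_gt0 T_ge _ x_neq0.
apply: le_lt_trans (small _ _ al_lt be_lt).
by apply: le_trans (mx_norm1D _ _) _; rewrite !mx_norm1Z.
Qed.

Lemma Theta0_qform_ge (R : realType) (a : R) N : 0 < a ->
  exists2 m : R, 0 < m & forall x, m * sqnorm x <= qform (Theta0 N a) x.
Proof.
move=> a_gt0; have [m m_gt0 m_le] := fin_lower_bound (fun i : 'I_N => theta_gt0 a_gt0 i).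
exists m => // x; apply: qform_diag_ge => [i j ij | i]; rewrite mxE.
  by case: eqP => // /val_inj ji; rewrite ji eqxx in ij.
by rewrite eqxx m_le.
Qed.

Theorem lemma3 (R : realType) (N : nat) (a : R) (hN : (3 <= N)%N) (ha : 0 < a) :
  exists P2 : 'M[R]_N,
    [/\ P2^T = P2 /\ pentadiagonal P2,
        (Hmat N a)^T *m P2 = P2 *m Hmat N a,
        (forall i j : 'I_N,
           let n := i.+1 in
           [/\ ((i : nat) = 0%N -> (j : nat) = 0%N -> P2 i j = 0) /\
               ((i : nat) = 0%N -> (j : nat) = 1%N -> P2 i j = 0) /\
               ((i : nat) = 0%N -> (j : nat) = 2%N -> P2 i j = 1),
               ((2 <= n)%N -> (n <= N - 1)%N -> (j : nat) = i ->
                 P2 i j = ((n - 1) * (n - 1)`! )%:R * (a + (3 * n - 4)%:R) / Dn a n),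
               ((2 <= n)%N -> (n <= N - 1)%N -> (j : nat) = i.+1 ->
                 P2 i j = - ((2 * (n - 1) * n`! )%:R / Dn a n))
             & ((2 <= n)%N -> (n <= N - 2)%N -> (j : nat) = i.+2 ->
                 P2 i j = ((n.+1)`! )%:R / (2 * Dn a n))]),
        (forall alpha beta : R,
           let Theta2 := Theta0 N a + alpha *: P1mat N a + beta *: P2 in
           (Hmat N a)^T *m Theta2 = Theta2 *m Hmat N a)
      & exists2 eps : R, 0 < eps &
          forall alpha beta : R, `|alpha| < eps -> `|beta| < eps ->
            is_metric (Hmat N a) (Theta0 N a + alpha *: P1mat N a + beta *: P2)].
Proof.
have sym0 := pent_mx_sym (@Theta0_pent R a N).
have sym1 := pent_mx_sym (@P1mat_pent R a N).
have sym2 : (P2mat a N)^T = P2mat a N by apply: pent_mx_sym => i j; rewrite mxE.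
have intertwine al be : let Theta2 := Theta0 N a + al *: P1mat N a + be *: P2mat a N in
    (Hmat N a)^T *m Theta2 = Theta2 *m Hmat N a.
  rewrite /= !mulmxDr !mulmxDl -!scalemxAr -!scalemxAl.
  by rewrite Theta0_intertwine // P1mat_intertwine // P2mat_intertwine.
have [m m_gt0 Theta0_ge] := Theta0_qform_ge N ha.
have [eps eps_gt0 Theta2_posdef] := posdef_perturb m_gt0 Theta0_ge sym0 sym1 sym2.
exists (P2mat a N); split => //.
- by split=> // i j far; rewrite mxE pent_far //; lia.
- exact: P2mat_intertwine.
- by move=> i j; apply: P2mat_entries.
- by exists eps => // al be al_lt be_lt; split; [apply: Theta2_posdef | apply: intertwine].
Qed.
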